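(* Let $d=2b$ be even, $d\geq 4$, and let $q\geq b$. Then every half-edge of every $(2q,2b)$-branching mobile has even weight. Similarly, the weights of the half-edges in the minimal pseudo $d/(d-2)$-orientation of any $2q$-annular $2b$-angulation of girth $2b$ are even.
   Context: A mobile is a plane tree whose vertices are black or white (not necessarily properly), black vertices possibly carrying dangling half-edges (buds). An $\mathbb N$-mobile gives each non-bud half-edge a weight in $\{0,1,2,\dots\}$, positive if incident to a white vertex, zero if incident to a black vertex; vertex weight = sum of weights of incident non-bud half-edges; edge weight = sum of its two half-edge weights; black-vertex degree counts buds. For $p\geq d\geq 3$, a $(p,d)$-branching mobile is an $\mathbb N$-mobile such that every edge has weight $d-2$; every black vertex has degree $d$ except one black vertex $s$ (special vertex) of degree $p$ carrying no bud; every white vertex not adjacent to $s$ has weight $d$, and the weights of the neighbors of $s$ sum to $pd-p-d$. A map is a connected finite graph embedded in the oriented sphere up to orientation-preserving homeomorphism; girth is the minimal cycle length. A $p$-annular $d$-angulation is a map with a marked face (boundary face) of degree $p$ with simple contour, all other faces of degree $d$, and a marked root-face distinct from the boundary face. A biorientation assigns to each half-edge a direction (ingoing/outgoing); an edge is $i$-way if $i$ of its half-edges are ingoing; directed paths follow 2-way edges or 1-way edges toward the ingoing half-edge; a circuit (simple closed directed path) is counterclockwise if the root-face is on its right; minimal = no counterclockwise circuit. An $\mathbb N$-biorientation has half-edge weights in $\{0,1,2,\dots\}$, positive on ingoing, zero on outgoing half-edges. A pseudo $d/(d-2)$-orientation is an $\mathbb N$-biorientation with every edge of weight $d-2$, every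 vertex not incident to the boundary face of weight $d$ (vertex weight = sum of weights of incident ingoing half-edges), and the boundary face contour a directed cycle of 1-way edges each with the boundary face on its right. A $p$-annular $d$-angulation of girth $d$ has a unique minimal one. *)

(* Maps and plane trees are encoded by rotation systems:
   a finite set of half-edges (darts) D, an involution alpha pairing the two
   half-edges of an edge, and a permutation sigma giving the COUNTERCLOCKWISE
   cyclic order of half-edges around each vertex.  Vertices are sigma-orbits,
   faces are orbits of phi = (alpha * sigma)%g, i.e. h |-> sigma (alpha h);
   with these conventions the face (phi-orbit) of a dart h lies on the RIGHT
   of h when h is traversed from its vertex (tail) to the vertex of alpha h. *)
From mathcomp Require Import all_boot fingroup perm.
Set Implicit Arguments. Unset Strict Implicit. Unset Printing Implicit Defensive.

Section Rot.
Variable D : finType.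
Implicit Types (alpha sigma : {perm D}) (h g : D).

Definition vtx sigma h : {set D} := porbit sigma h.
Definition fface alpha sigma h : {set D} := porbit (alpha * sigma)%g h.
Definition edge_of alpha h : {set D} := [set h; alpha h].

Definition dmove alpha sigma : rel D := fun a b => (b == sigma a) || (b == alpha a).

Definition planar_map alpha sigma : Prop :=
  [/\ involutive alpha, (forall h, alpha h != h),
      (forall x y, connect (dmove alpha sigma) x y) &
      #|porbits sigma| + #|porbits (alpha * sigma)%g| = (#|D| %/ 2) + 2].

(* a simple cycle of the underlying graph, as a cyclic sequence of darts
   (each dart ends where the next starts), with distinct vertices and edges *)
Definition graph_cycle alpha sigma (c : seq D) : bool :=
  [&& c != [::],
      path.cycle (fun g g' => vtx sigma (alpha g) == vtx sigma g') c,
      uniq (map (vtx sigma) c) & uniq (map (edge_of alpha) c)].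

Definition has_girth alpha sigma (k : nat) : Prop :=
  (exists c, graph_cycle alpha sigma c /\ size c = k) /\
  (forall c, graph_cycle alpha sigma c -> k <= size c).

(* p-annular d-angulation: boundary face = face of dart hb, root face = face of r *)
Definition annular_dangulation alpha sigma (p d : nat) (hb r : D) : Prop :=
  [/\ planar_map alpha sigma,
      #|fface alpha sigma hb| = p,
      {in fface alpha sigma hb &, injective (vtx sigma)},
      (forall h, fface alpha sigma h != fface alpha sigma hb ->
                 #|fface alpha sigma h| = d) &
      fface alpha sigma r != fface alpha sigma hb].

(* N-biorientations: a half-edge is ingoing iff its weight is positive.
   Pseudo d/(d-2)-orientation. *)
Definition pseudo_orientation alpha sigma (d : nat) (hb : D) (w : D -> nat) : Prop :=
  [/\ (forall h, w h + w (alpha h) = d - 2),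
      (forall h, (forall g, g \in fface alpha sigma hb -> vtx sigma g != vtx sigma h) ->
                 \sum_(g in vtx sigma h) w g = d) &
      (forall h, h \in fface alpha sigma hb -> w h = 0 /\ 0 < w (alpha h))].

(* a dart g can be followed (from its tail to its head) by a directed path
   iff the half-edge alpha g at the head is ingoing *)
Definition directed_circuit alpha sigma (w : D -> nat) (c : seq D) : bool :=
  graph_cycle alpha sigma c && all (fun g => 0 < w (alpha g)) c.

(* moves between darts that stay in the region on the right of the cycle c:
   walk around a face, or cross an edge not belonging to c *)
Definition right_move alpha sigma (c : seq D) : rel D :=
  fun a b => (b == (alpha * sigma)%g a) ||
             [&& b == alpha a, a \notin c & alpha a \notin c].

Definition root_on_right alpha sigma (r : D) (c : seq D) : bool :=
  has (fun h => connect (right_move alpha sigma c) h r) c.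

Definition minimal_orientation alpha sigma (w : D -> nat) (r : D) : Prop :=
  forall c, directed_circuit alpha sigma w c -> ~~ root_on_right alpha sigma r c.

End Rot.

Section Mob.
Variable H : finType.
Implicit Types (alpha sigma : {perm H}) (h g : H).

(* plane tree with buds: buds are the half-edges fixed by alpha *)
Definition plane_tree_buds (bud : pred H) alpha sigma : Prop :=
  [/\ (forall h, bud h -> alpha h = h),
      (forall h, ~~ bud h -> alpha h != h),
      involutive alpha,
      (forall x y, connect (dmove alpha sigma) x y) &
      #|porbits sigma| = (#|[set h | ~~ bud h]| %/ 2) + 1].

Definition vweight (bud : pred H) (w : H -> nat) (v : {set H}) : nat :=
  \sum_(g in v | ~~ bud g) w g.

Definition adjacent_to (bud : pred H) alpha sigma h hs : bool :=
  [exists g in vtx sigma h, ~~ bud g && (alpha g \in vtx sigma hs)].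

Definition neighbours alpha sigma hs : {set {set H}} :=
  [set vtx sigma (alpha g) | g in vtx sigma hs].

(* (p,d)-branching mobile; black v = true means the vertex v is black;
   the special vertex s is the vertex of hs *)
Definition branching_mobile (bud : pred H) alpha sigma (black : {set H} -> bool)
    (w : H -> nat) (p d : nat) (hs : H) : Prop :=
  [/\ plane_tree_buds bud alpha sigma,
      (forall h, bud h -> black (vtx sigma h)),
      (forall h, ~~ bud h -> (0 < w h) = ~~ black (vtx sigma h)),
      (forall h, ~~ bud h -> w h + w (alpha h) = d - 2) & 
   [/\ [/\ black (vtx sigma hs), #|vtx sigma hs| = p &
          (forall h, h \in vtx sigma hs -> ~~ bud h)],
      (forall h, black (vtx sigma h) -> vtx sigma h != vtx sigma hs ->
                 #|vtx sigma h| = d),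
      (forall h, ~~ black (vtx sigma h) -> ~~ adjacent_to bud alpha sigma h hs ->
                 vweight bud w (vtx sigma h) = d) &
      \sum_(u in neighbours alpha sigma hs) vweight bud w u = p * d - p - d]].

End Mob.

From Pilot Require Import Defs.
From mathcomp Require Import all_boot fingroup perm zify.
Set Implicit Arguments. Unset Strict Implicit. Unset Printing Implicit Defensive.

(* Parity propagates along half-edges.  Every edge has even weight 2b - 2, so
   both halves of an edge have the same parity; every vertex whose weight is
   prescribed to be 2b and that carries an odd half-edge carries a second one.
   Following odd half-edges therefore yields either a cycle of odd edges or a
   simple path of odd edges between two exceptional vertices: neighbours of
   the special vertex in a mobile, vertices of the boundary face in a
   d-angulation.

   In a mobile, odd half-edges have positive weight, hence odd edges join
   white vertices; the cycle, or the path closed up through the special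
   vertex, would be a cycle in a plane tree.  In a pseudo-orientation odd
   edges are 2-way, so the cycle is a directed circuit in both directions,
   and the path closes up with either arc of the boundary face into a
   directed circuit; in both cases the root face lies on the right of one of
   the two circuits, contradicting minimality. *)

Lemma last_drop (T : Type) (x0 : T) n s : n < size s -> last x0 (drop n s) = last x0 s.
Proof.
elim: s n x0 => [|a s IH] [|n] x0 //= ltns.
by case: s IH ltns => [|b s] IH ltns //=; rewrite IH.
Qed.

Lemma odd_eq_of_even_sum m n : ~~ odd (m + n) -> odd n = odd m.
Proof. by rewrite oddD; case: (odd m); case: (odd n). Qed.

Lemma even_double_sub2 b : ~~ odd (2 * b - 2).
Proof. by rewrite (_ : 2 * b - 2 = (b - 1).*2) ?odd_double //; lia. Qed.

Lemma odd_sum_other (T : finType) (P : pred T) (w : T -> nat) x :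
  ~~ odd (\sum_(g | P g) w g) -> P x -> odd (w x) ->
  exists2 g, P g & odd (w g) && (g != x).
Proof.
move=> ev Px ox; apply/exists_inP; apply: contraNT ev => /exists_inPn none.
rewrite (bigD1 x) //= oddD ox /=; apply: (big_ind (fun n => ~~ odd n)) => //.
  by move=> m n em en; rewrite oddD (negbTE em) (negbTE en).
by move=> g /andP[Pg gx]; move: (none g Pg); rewrite gx andbT.
Qed.

Lemma porbit_fconnect (T : finType) (s : {perm T}) x y : (y \in porbit s x) = fconnect s x y.
Proof.
apply/porbitP/idP => [[i ->]|]; first by rewrite permX fconnect_iter.
by rewrite fconnect_orbit => /trajectP[i _ ->]; exists i; rewrite permX.
Qed.

Lemma porbit_arcs (T : finType) (s : {perm T}) x y : y \in porbit s x -> x != y ->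
  exists m n, [/\ iter m.+1 s x = y, iter n.+1 s y = x,
    uniq (traject s x m.+1 ++ traject s y n.+1) &
    traject s x m.+1 ++ traject s y n.+1 =i porbit s x].
Proof.
rewrite porbit_fconnect => xy nxy.
set N := fingraph.order s x; set i := findex s x y.
have ltiN : i < N by apply: findex_max.
have [m im] : exists m, i = m.+1.
  by exists i.-1; rewrite prednK // lt0n findex_eq0.
have [n iN] : exists n, N - i = n.+1 by exists (N - i).-1; rewrite prednK // subn_gt0.
have itx : iter i s x = y by apply: iter_findex.
have orbE : fingraph.orbit s x = traject s x m.+1 ++ traject s y n.+1.
  by rewrite /fingraph.orbit -/N -{1}(subnKC (ltnW ltiN)) trajectD itx iN im.
exists m, n; split.
- by rewrite -im.
- by rewrite -iN -itx -iterD subnK ?(ltnW ltiN) // iter_order //; exact: perm_inj.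
- by rewrite -orbE orbit_uniq.
- by move=> z; rewrite -orbE -fconnect_orbit porbit_fconnect.
Qed.

Lemma connect_preserved (T : finType) (e : rel T) (P : pred T) x y :
  (forall a b, P a -> e a b -> P b) -> P x -> connect e x y -> P y.
Proof.
move=> stepP Px /connectP[p pa ->]; elim: p x pa Px => //= z p IH x /andP[exz pa] Px.
exact: IH pa (stepP _ _ Px exz).
Qed.

(** * Walks, cycles and components in rotation systems *)

Section RotationSystem.
Variable D : finType.
Variables alpha sigma : {perm D}.
Hypothesis alphaK : involutive alpha.
Local Notation vtx := (Defs.vtx sigma).
Local Notation edge := (edge_of alpha).

Lemma vtx_id x : x \in vtx x.  Proof. exact: porbit_id. Qed.
Lemma vtx_eqE x y : (vtx x == vtx y) = (x \in vtx y). Proof. exact: eq_porbit_mem. Qed.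
Lemma vtxS x : vtx (sigma x) = vtx x.
Proof. by have := porbit_perm sigma 1 x; rewrite expg1. Qed.

Definition consec (g g' : D) := vtx (alpha g) == vtx g'.
Definition consec_nb (g g' : D) := consec g g' && (g' != alpha g).

Lemma sorted_consec_nb c : sorted consec_nb c -> sorted consec c.
Proof. by case: c => //= a s; apply: sub_path => x y /andP[]. Qed.

Lemma consec_cycle_nth c x0 i : sorted consec c -> consec (last x0 c) (head x0 c) ->
  i < size c ->
  vtx (alpha (nth x0 c i)) = vtx (nth x0 c (if i.+1 < size c then i.+1 else 0)).
Proof.
move=> /(sortedP x0) sc cl ilt; case: ifP => lt; first by apply/eqP; apply: sc.
have -> : i = (size c).-1 by lia.
by rewrite nth_last nth0; apply/eqP.
Qed.

(* The positions of [x] and [alpha x] in [c] would be successors of each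
   other, forcing [size c = 2]. *)
Lemma nb_cycle_alpha_fixed c x : sorted consec_nb c -> consec (last x c) (head x c) ->
  uniq (map vtx c) -> x \in c -> alpha x \in c -> alpha x = x.
Proof.
move=> snb cl uv xc axc.
have sc := sorted_consec_nb snb.
set k := size c.
have inj_nth i i' : i < k -> i' < k -> vtx (nth x c i) = vtx (nth x c i') -> i = i'.
  move=> lti lti' e; apply/eqP; rewrite -(nth_uniq (vtx x) _ _ uv) ?size_map //.
  by rewrite !(nth_map x) // e.
have next_lt i : (if i.+1 < k then i.+1 else 0) < k.
  by case: ifP => // _; rewrite lt0n size_eq0; apply: contraTneq xc => ->.
have ltj : index x c < k by rewrite index_mem.
have ltm : index (alpha x) c < k by rewrite index_mem.
have nj : nth x c (index x c) = x by rewrite nth_index.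
have nm : nth x c (index (alpha x) c) = alpha x by rewrite nth_index.
set j := index x c in ltj nj *; set m := index (alpha x) c in ltm nm *.
have m_next : m = (if j.+1 < k then j.+1 else 0).
  have e := consec_cycle_nth sc cl ltj; rewrite nj -nm in e.
  exact: inj_nth e.
have j_next : j = (if m.+1 < k then m.+1 else 0).
  have e : vtx (nth x c j) = vtx (nth x c (if m.+1 < k then m.+1 else 0)).
    by rewrite nj -[in LHS](alphaK x) -nm; exact: consec_cycle_nth.
  exact: inj_nth e.
case: (eqVneq m j) => [mj|mnj]; first by rewrite -nm mj nj.
have k2 : k = 2 by move: m_next j_next; case: ifP => ?; case: ifP => ? ? ?; lia.
clearbody j m; rewrite /k in k2 ltj ltm.
move: snb ltj ltm nj nm mnj; clear -k2 alphaK.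
case: c k2 => [|a [|b [|? ?]]] //= _; rewrite andbT => /andP[_ nab].
by case: j m => [|[|j]] [|[|m]] //= _ _ ? ? _; subst; rewrite ?alphaK eqxx in nab.
Qed.

Lemma nb_cycle_uniq_edges c x0 : sorted consec_nb c -> consec (last x0 c) (head x0 c) ->
  uniq (map vtx c) -> uniq (map edge c).
Proof.
move=> snb cl uv; rewrite map_inj_in_uniq; first exact: map_uniq uv.
move=> x y xc yc exy.
have : y \in edge y by rewrite /edge_of !inE eqxx.
rewrite -exy /edge_of !inE => /orP[/eqP //|/eqP yx].
have cl' : consec (last x c) (head x c) by case: (c) cl xc.
by rewrite yx (nb_cycle_alpha_fixed snb cl' uv xc) // -yx.
Qed.

Lemma graph_cycle_drop q x0 i : sorted consec_nb q -> uniq (map vtx q) -> i < size q ->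
  vtx (alpha (last x0 q)) = vtx (nth x0 q i) -> graph_cycle alpha sigma (drop i q).
Proof.
move=> snb uv ltiq e.
have snb' := drop_sorted i snb.
have uv' : uniq (map vtx (drop i q)) by rewrite map_drop drop_uniq.
have cl : consec (last x0 (drop i q)) (head x0 (drop i q)).
  by rewrite last_drop // -nth0 nth_drop addn0 /consec e.
apply/and4P; split.
- by rewrite -size_eq0 size_drop subn_eq0 -ltnNge.
- move: snb' cl; case: (drop i q) => //= a s snb' cl.
  by rewrite rcons_path [X in _ && X]cl andbT; apply: sub_path snb' => y z /andP[].
- exact: uv'.
- exact: nb_cycle_uniq_edges cl uv'.
Qed.

Lemma consec_path_heads x s : path consec x s ->
  map (vtx \o alpha) (x :: s) = rcons (map vtx s) (vtx (alpha (last x s))).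
Proof. by elim: s x => [|y s IH] x //= /andP[/eqP-> pa]; rewrite -(IH _ pa). Qed.

Lemma consec_path_tails x s : path consec x s -> map vtx s = map (vtx \o alpha) (belast x s).
Proof. by elim: s x => [|y s IH] x //= /andP[/eqP-> pa]; rewrite (IH _ pa). Qed.

Lemma mem_map_alpha_rev c x : (x \in map alpha (rev c)) = (alpha x \in c).
Proof. by rewrite -{1}(alphaK x) mem_map ?mem_rev //; exact: perm_inj. Qed.

Lemma sorted_consec_nb_rev s : sorted consec_nb s -> sorted consec_nb (map alpha (rev s)).
Proof.
rewrite sorted_map rev_sorted; case: s => [//|x s]; apply: sub_path => u v /andP[/eqP e vu].
by rewrite /relpre /consec_nb /consec /= alphaK e eqxx eq_sym.
Qed.

Lemma graph_cycle_rev c : graph_cycle alpha sigma c -> graph_cycle alpha sigma (map alpha (rev c)).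
Proof.
case/and4P => nc cyc uv ue; apply/and4P; split.
- by rewrite -size_eq0 size_map size_rev size_eq0.
- rewrite cycle_map rev_cycle (eq_cycle (e' := consec)) // => x y /=.
  by rewrite /consec alphaK eq_sym.
- rewrite -map_comp map_rev rev_uniq.
  case: c nc cyc uv {ue} => [//|x s] _ cyc uv.
  have /andP[pa /eqP e] : path consec x s && consec (last x s) x by rewrite -rcons_path.
  by rewrite consec_path_heads // e -rot1_cons rot_uniq.
- have -> : map edge (map alpha (rev c)) = map edge (rev c).
    by rewrite -map_comp; apply: eq_map => x; rewrite /edge_of /= alphaK setUC.
  by rewrite map_rev rev_uniq.
Qed.

Section Walk.
Variables (P X : pred D).
Hypothesis P_step : forall g, P g -> ~~ X (alpha g) ->
  exists g', [/\ vtx g' = vtx (alpha g), P g' & g' != alpha g].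

Definition exit_path g0 p :=
  [/\ path consec_nb g0 p, all P (g0 :: p),
      uniq (map vtx (g0 :: p) ++ [:: vtx (alpha (last g0 p))]),
      X (alpha (last g0 p)) & all (fun g => ~~ X (alpha g)) (belast g0 p)].

Definition cycle_or_exit_path g0 :=
  (exists2 c, graph_cycle alpha sigma c & all P c) \/ exists p, exit_path g0 p.

Lemma cycle_or_exit_path_stop g0 p : path consec_nb g0 p -> all P (g0 :: p) ->
  uniq (map vtx (g0 :: p)) -> all (fun g => ~~ X (alpha g)) (belast g0 p) ->
  (vtx (alpha (last g0 p)) \in map vtx (g0 :: p)) || X (alpha (last g0 p)) ->
  cycle_or_exit_path g0.
Proof.
move=> pa aP uv aX; case: (boolP (_ \in _)) => [back _|fresh /= Xl]; last first.
  by right; exists p; split=> //; rewrite cats1 rcons_uniq fresh.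
left; set q := g0 :: p; set i := index (vtx (alpha (last g0 p))) (map vtx q).
have ltiq : i < size q by rewrite -(size_map vtx) index_mem.
exists (drop i q); last by apply/allP => x /mem_drop; apply/allP.
by apply: (graph_cycle_drop (x0 := g0)) => //; rewrite -(nth_map g0 (vtx g0)) // nth_index.
Qed.

(* The vertices along the walk are distinct subsets of [D], which bounds its
   length. *)
Lemma cycle_or_exit_path_rec n g0 p : #|{set D}| - size p <= n ->
  path consec_nb g0 p -> all P (g0 :: p) -> uniq (map vtx (g0 :: p)) ->
  all (fun g => ~~ X (alpha g)) (belast g0 p) -> cycle_or_exit_path g0.
Proof.
elim: n p => [|n IH] p bound pa aP uv aX;
  (case: (boolP ((vtx (alpha (last g0 p)) \in map vtx (g0 :: p)) || X (alpha (last g0 p))))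
     => [/(cycle_or_exit_path_stop pa aP uv aX) // | ];
   rewrite negb_or => /andP[fresh nX]);
  (have Pl : P (last g0 p) by apply/(allP aP)/mem_last);
  have [g' [vg' Pg' g'nb]] := P_step Pl nX;
  have uv' : uniq (map vtx (g0 :: rcons p g'))
    by rewrite -rcons_cons map_rcons rcons_uniq vg' fresh.
  all: have := card_uniqP uv'; rewrite size_map /= size_rcons => card_vtx.
  all: have : (size p).+2 <= #|{set D}| by rewrite -card_vtx; exact: max_card.
  by lia.
move=> _; apply: (IH (rcons p g')).
- by rewrite size_rcons; lia.
- by rewrite rcons_path pa /consec_nb /consec vg' eqxx g'nb.
- by rewrite -rcons_cons all_rcons Pg' aP.
- exact: uv'.
- by rewrite belast_rcons lastI all_rcons nX aX.
Qed.

Lemma cycle_or_exit_pathP g0 : P g0 -> cycle_or_exit_path g0.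
Proof.
move=> Pg0; apply: (@cycle_or_exit_path_rec #|{set D}| g0 [::]) => //=.
  by rewrite subn0.
by rewrite Pg0.
Qed.

(* If a walk from [g] ends at an [X]-vertex, walk again from there. *)
Lemma no_P_dart : (forall g, P g -> P (alpha g)) ->
  (forall c, graph_cycle alpha sigma c -> all P c -> False) ->
  (forall g p, X g -> exit_path g p -> False) -> forall g, ~~ P g.
Proof.
move=> P_alpha no_cycle no_exit g; apply/negP => Pg.
have [[c gc aPc]|[p0 [_ aP0 _ X0 _]]] := cycle_or_exit_pathP Pg; first exact: no_cycle gc aPc.
have P1 : P (alpha (last g p0)) by apply/P_alpha/(allP aP0)/mem_last.
have [[c gc aPc]|[p1 ep1]] := cycle_or_exit_pathP P1; first exact: no_cycle gc aPc.
exact: no_exit X0 ep1.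
Qed.
End Walk.

Section Components.

(* The graph on darts whose edges are the rotations [sigma] and the edges
   [{h, alpha h}] with [h] in [A]; its components are the vertex sets of the
   components of the subgraph spanned by [A]. *)
Definition span_rel (A : {set D}) : rel D :=
  fun a b => [|| b == sigma a, a == sigma b | (a \in A) && (b == alpha a)].
Definition alpha_closed (A : {set D}) := forall x, x \in A -> alpha x \in A.

Definition comp A x := [set y | connect (span_rel A) x y].
Definition ncomp A := #|[set comp A x | x : D]|.

Lemma span_rel_sym A : alpha_closed A -> connect_sym (span_rel A).
Proof.
move=> clA; apply: sym_connect_sym => a b; rewrite /span_rel.
apply/idP/idP => /or3P[->|->|/andP[Aa /eqP E]]; rewrite ?orbT //;
  by rewrite E alphaK clA ?eqxx ?orbT.
Qed.

Lemma connect_span_vtx A x y : y \in vtx x -> connect (span_rel A) x y.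
Proof.
case/porbitP => i ->; elim: i => [|i IH]; first by rewrite expg0 perm1 connect0.
rewrite expgSr permM; apply: connect_trans IH (connect1 _).
by rewrite /span_rel eqxx.
Qed.

Lemma comp0 x : comp set0 x = vtx x.
Proof.
apply/setP => y; rewrite inE; apply/idP/idP; last exact: connect_span_vtx.
apply: (connect_preserved (P := fun z => z \in vtx x)); last exact: vtx_id.
move=> a b av /or3P[/eqP->|/eqP ae|]; last by rewrite inE.
  by rewrite -vtx_eqE vtxS vtx_eqE.
by move: av; rewrite ae -vtx_eqE vtxS vtx_eqE.
Qed.

Lemma ncomp0 : ncomp set0 = #|porbits sigma|.
Proof.
by apply: eq_card => K; apply/imsetP/imsetP => -[x _ ->]; exists x => //; rewrite comp0.
Qed.

Lemma connect_spanS (A B : {set D}) :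
  A \subset B -> subrel (connect (span_rel A)) (connect (span_rel B)).
Proof.
move=> sAB; apply: connect_sub => a b; rewrite /span_rel => rab; apply: connect1.
case/or3P: rab => [->|->|/andP[aA /eqP ->]]; rewrite ?orbT //.
by rewrite (subsetP sAB _ aA) eqxx !orbT.
Qed.

(* A path using the new edge [{a, alpha a}] crosses it at most once. *)
Lemma connect_span_add_edge A a x y : alpha_closed A ->
  connect (span_rel (A :|: [set a; alpha a])) x y ->
  [|| connect (span_rel A) x y,
      connect (span_rel A) x a && connect (span_rel A) (alpha a) y |
      connect (span_rel A) x (alpha a) && connect (span_rel A) a y].
Proof.
move=> clA; pose P z := [|| connect (span_rel A) x z,
  connect (span_rel A) x a && connect (span_rel A) (alpha a) z |
  connect (span_rel A) x (alpha a) && connect (span_rel A) a z].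
apply: (connect_preserved (P := P)); last by rewrite /P connect0.
have ext u z z' : connect (span_rel A) u z -> span_rel A z z' -> connect (span_rel A) u z'.
  by move=> uz zz'; apply: connect_trans uz (connect1 zz').
rewrite {}/P => z z' Pz; case rzz' : (span_rel A z z').
  by case/or3P: Pz => [xz|/andP[xa az]|/andP[xa az]];
    rewrite ?(ext _ _ _ xz rzz') ?(ext _ _ _ az rzz') ?xa ?orbT.
rewrite /span_rel; case/or3P => [e|e|/andP[]].
- by move: rzz'; rewrite /span_rel e.
- by move: rzz'; rewrite /span_rel e orbT.
rewrite !inE => /orP[Az|/orP[/eqP za|/eqP za]] /eqP E; subst z'.
- by move: rzz'; rewrite /span_rel Az eqxx !orbT.
- subst z; case/or3P: Pz => [xa|/andP[xa _]|/andP[xa _]]; apply/or3P.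
  + by apply: Or32; rewrite xa connect0.
  + by apply: Or32; rewrite xa connect0.
  + exact: Or31.
- subst z; rewrite alphaK; case/or3P: Pz => [xa|/andP[xa _]|/andP[xa _]]; apply/or3P.
  + by apply: Or33; rewrite xa connect0.
  + exact: Or31.
  + by apply: Or33; rewrite xa connect0.
Qed.

Lemma comp_eqE A x y : alpha_closed A -> (comp A x == comp A y) = connect (span_rel A) x y.
Proof.
move=> clA; apply/eqP/idP => [E|xy].
  have : y \in comp A y by rewrite inE connect0.
  by rewrite -E inE.
apply/setP => z; rewrite !inE; apply/idP/idP => [xz|]; last exact: connect_trans.
by apply: connect_trans xz; rewrite span_rel_sym.
Qed.

Lemma alpha_closedD2 A a : alpha_closed A -> alpha_closed (A :\ a :\ alpha a).
Proof.
move=> clA z; rewrite !inE => /and3P[z1 z2 zA].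
rewrite clA // andbT (inj_eq perm_inj) z2 /=.
by apply: contra z1 => /eqP <-; rewrite alphaK.
Qed.

Lemma alpha_closed_split A a : alpha_closed A -> a \in A ->
  A = (A :\ a :\ alpha a) :|: [set a; alpha a].
Proof.
move=> clA aA; apply/setP => z; rewrite !inE.
case: (eqVneq z (alpha a)) => [->|]; rewrite ?clA ?orbT //=.
by case: (eqVneq z a) => [->|]; rewrite ?aA ?orbT //= orbF.
Qed.

Lemma card_alpha_closedD2 A a : alpha_closed A -> a \in A -> alpha a != a ->
  #|A| = #|A :\ a :\ alpha a| + 2.
Proof.
move=> clA aA aa; rewrite (cardsD1 a A) aA (cardsD1 (alpha a) (A :\ a)) !inE aa clA //=.
by lia.
Qed.

Lemma ncomp_add_edge A a : alpha_closed A -> ncomp A <= ncomp (A :|: [set a; alpha a]) + 1.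
Proof.
move=> clA; set A' := A :|: [set a; alpha a].
have clA' : alpha_closed A'.
  by move=> z; rewrite !inE => /or3P[/clA ->|/eqP->|/eqP->]; rewrite ?alphaK ?eqxx ?orbT.
set S := [set comp A x | x : D]; set S' := [set comp A' x | x : D].
pose F (K : {set D}) := odflt set0 (omap (comp A') [pick z in K]).
have FE x : F (comp A x) = comp A' x.
  rewrite /F; case: pickP => [z|/(_ x)]; last by rewrite inE connect0.
  rewrite inE => xz /=; apply/eqP; rewrite (comp_eqE _ _ clA') span_rel_sym //.
  exact: connect_spanS (subsetUl _ _) _ _ xz.
have F_inj : {in S :\ comp A (alpha a) &, injective F}.
  move=> K1 K2; rewrite !inE => /andP[n1 /imsetP[x1 _ E1]] /andP[n2 /imsetP[x2 _ E2]].
  subst K1 K2; rewrite !FE => E.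
  have /(connect_span_add_edge clA) : connect (span_rel A') x1 x2 by rewrite -comp_eqE // E.
  case/or3P => [x12|/andP[_ ax2]|/andP[x1a _]]; first by apply/eqP; rewrite comp_eqE.
  - by move: n2; rewrite comp_eqE // span_rel_sym // ax2.
  - by move: n1; rewrite comp_eqE // x1a.
have le1 : #|S| <= #|S :\ comp A (alpha a)| + 1.
  by have := cardsD1 (comp A (alpha a)) S; have := leq_b1 (comp A (alpha a) \in S); lia.
have le2 : #|S :\ comp A (alpha a)| <= #|S'|.
  rewrite -(card_in_imset F_inj); apply: subset_leq_card; apply/subsetP => K.
  by case/imsetP => K0 /setD1P[_ /imsetP[x _ ->]] ->; rewrite FE; apply/imsetP; exists x.
by rewrite /ncomp -/S -/S'; lia.
Qed.

Lemma ncomp_add_connected_edge A a : alpha_closed A -> connect (span_rel A) a (alpha a) ->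
  ncomp (A :|: [set a; alpha a]) = ncomp A.
Proof.
move=> clA aa; rewrite /ncomp.
have E x : comp (A :|: [set a; alpha a]) x = comp A x.
  apply/setP => y; rewrite !inE; apply/idP/idP => [/(connect_span_add_edge clA)|xy].
    case/or3P => [//|/andP[xa ay]|/andP[xa ay]].
      exact: connect_trans xa (connect_trans aa ay).
    by apply: connect_trans xa _; apply: connect_trans _ ay; rewrite span_rel_sym.
  exact: connect_spanS (subsetUl _ _) _ _ xy.
by apply: eq_card => K; apply/imsetP/imsetP => -[x _ ->]; exists x => //; rewrite E.
Qed.

(* Each edge merges at most two components. *)
Lemma porbits_le_ncomp (A : {set D}) : alpha_closed A -> (forall x, x \in A -> alpha x != x) ->
  2 * #|porbits sigma| <= 2 * ncomp A + #|A|.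
Proof.
have [n] := ubnP #|A|; elim: n A => // n IH A ltAn clA noloop.
have [->|[a aA]] := set_0Vmem A; first by rewrite ncomp0 cards0; lia.
have clA0 := alpha_closedD2 (a := a) clA.
have cardA := card_alpha_closedD2 clA aA (noloop a aA).
have := ncomp_add_edge a clA0; rewrite -alpha_closed_split //.
have : 2 * #|porbits sigma| <= 2 * ncomp (A :\ a :\ alpha a) + #|A :\ a :\ alpha a|.
  apply: IH clA0 _; first by lia.
  by move=> z; rewrite !inE => /and3P[_ _ /noloop].
by lia.
Qed.

Lemma connect_span_path (A : {set D}) g0 p : path consec g0 p -> all (mem A) (g0 :: p) ->
  connect (span_rel A) g0 (alpha (last g0 p)).
Proof.
elim: p g0 => [|y p IH] g0 /=.
  by rewrite andbT => _ g0A; apply: connect1; rewrite /span_rel g0A eqxx !orbT.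
case/andP=> g0y pa /andP[g0A aA]; apply: connect_trans (IH y pa aA).
apply: connect_trans (connect1 (_ : span_rel A g0 (alpha g0))) _.
  by rewrite /span_rel g0A eqxx !orbT.
by apply: connect_span_vtx; rewrite -vtx_eqE eq_sym.
Qed.

Lemma plane_tree_alpha_closed (bud : pred D) : plane_tree_buds bud alpha sigma ->
  alpha_closed [set h | ~~ bud h].
Proof.
case=> budF nbud_loop _ _ _ h; rewrite !inE => nbh; apply/negP => /budF.
by rewrite alphaK => E; move: (nbud_loop h nbh); rewrite -E eqxx.
Qed.

(* A non-separating edge would leave a connected spanning subgraph with
   #vertices = #edges, which [porbits_le_ncomp] forbids. *)
Lemma plane_tree_edge_separates (bud : pred D) e : plane_tree_buds bud alpha sigma ->
  ~~ bud e -> ~~ connect (span_rel ([set h | ~~ bud h] :\ e :\ alpha e)) e (alpha e).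
Proof.
case=> budF nbud_loop _ conn card_vtx nbe; apply/negP => ee.
set full := [set h | ~~ bud h].
have clF : alpha_closed full by apply: plane_tree_alpha_closed.
have eF : e \in full by rewrite inE.
have clF0 := alpha_closedD2 (a := e) clF.
have same : ncomp full = ncomp (full :\ e :\ alpha e).
  by rewrite {1}(alpha_closed_split clF eF) ncomp_add_connected_edge.
have one : ncomp full <= 1.
  rewrite /ncomp; apply: leq_trans (_ : #|[set setT : {set D}]| <= 1); last by rewrite cards1.
  apply: subset_leq_card; apply/subsetP => K /imsetP[x _ ->]; rewrite inE.
  apply/eqP/setP => y; rewrite !inE; apply: connect_sub (conn x y) => a b.
  case/orP=> /eqP->; first by apply: connect1; rewrite /span_rel eqxx.
  case ba: (bud a); first by rewrite (budF _ ba) connect0.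
  by apply: connect1; rewrite /span_rel inE ba eqxx /= !orbT.
have := card_alpha_closedD2 clF eF (nbud_loop e nbe).
have : 2 * #|porbits sigma| <= 2 * ncomp (full :\ e :\ alpha e) + #|full :\ e :\ alpha e|.
  by apply: porbits_le_ncomp clF0 _ => z; rewrite !inE => /and3P[_ _]; exact: nbud_loop.
have := divn_eq #|full| 2; have := ltn_pmod #|full| (isT : 0 < 2).
by rewrite card_vtx -/full in same *; lia.
Qed.

End Components.

Local Notation right_of c x := (root_on_right alpha sigma x c).

Lemma right_of_step (c : seq D) y z : right_of c y -> right_move alpha sigma c y z -> right_of c z.
Proof.
by case/hasP=> h hc hy yz; apply/hasP; exists h => //; apply: connect_trans hy (connect1 yz).
Qed.

Lemma right_of_face (c : seq D) y : right_of c y -> right_of c ((alpha * sigma)%g y).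
Proof. by move/right_of_step; apply; rewrite /right_move eqxx. Qed.

Lemma right_of_porbit (c : seq D) y z : y \in c -> z \in porbit (alpha * sigma)%g y -> right_of c z.
Proof.
move=> yc /porbitP[i ->]; elim: i => [|i IH]; first by apply/hasP; exists y; rewrite ?perm1.
by rewrite expgSr permM; apply: right_of_face.
Qed.

Lemma right_of_cross (c : seq D) y :
  right_of c y -> y \notin c -> alpha y \notin c -> right_of c (alpha y).
Proof. by move/right_of_step=> ry yc ayc; apply: ry; rewrite /right_move eqxx yc ayc orbT. Qed.

(* Outside [S] both right regions are closed under [alpha], and
   [sigma = phi \o alpha]; so their union is closed under [dmove]. *)
Lemma right_of_cover (c1 c2 : seq D) (S : pred D) :
  (forall x, S x -> S (alpha x)) ->
  (forall x, ~~ S x -> [&& x \notin c1, alpha x \notin c1, x \notin c2 & alpha x \notin c2]) ->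
  (forall x, S x -> right_of c1 x || right_of c2 x) -> (exists x0, S x0) ->
  (forall x y, connect (dmove alpha sigma) x y) ->
  forall r, right_of c1 r || right_of c2 r.
Proof.
move=> S_alpha outside Sright [x0 Sx0] conn r.
have cross y : ~~ S y -> right_of c1 y || right_of c2 y ->
    right_of c1 (alpha y) || right_of c2 (alpha y).
  move=> nSy; case/and4P: (outside y nSy) => n1 n2 n3 n4.
  by case/orP=> ry; rewrite (right_of_cross ry) ?orbT.
have alpha_step y : right_of c1 y || right_of c2 y ->
    right_of c1 (alpha y) || right_of c2 (alpha y).
  by case Sy: (S y) => ?; [apply/Sright/S_alpha | apply: cross; rewrite ?Sy].
apply: (connect_preserved (P := fun z => right_of c1 z || right_of c2 z)) (conn x0 r);
  last exact: Sright.
move=> a z Ra /orP[/eqP->|/eqP->]; last exact: alpha_step.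
have -> : sigma a = (alpha * sigma)%g (alpha a) by rewrite permM alphaK.
by case/orP: (alpha_step _ Ra) => /right_of_face ->; rewrite ?orbT.
Qed.

End RotationSystem.

(** * Branching mobiles *)

Section BranchingMobile.
Variable H : finType.
Variables (bud : pred H) (alpha sigma : {perm H}) (black : {set H} -> bool) (w : H -> nat).
Variables (p b : nat) (hs : H).
Hypothesis mobile : branching_mobile bud alpha sigma black w p (2 * b) hs.
Local Notation vtx := (Defs.vtx sigma).

Let tree : plane_tree_buds bud alpha sigma. Proof. by case: mobile. Qed.
Let alphaK : involutive alpha. Proof. by case: tree. Qed.

Lemma mobile_nbud_alpha g : ~~ bud g -> ~~ bud (alpha g).
Proof.
by move=> nbg; have := plane_tree_alpha_closed alphaK tree (x := g); rewrite !inE; apply.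
Qed.

Lemma mobile_odd_alpha g : ~~ bud g -> odd (w (alpha g)) = odd (w g).
Proof.
by case: mobile => _ _ _ wedge _ nbg; apply: odd_eq_of_even_sum; rewrite wedge // even_double_sub2.
Qed.

Lemma mobile_odd_white g : ~~ bud g -> odd (w g) -> ~~ black (vtx g).
Proof. by case: mobile => _ _ wpos _ _ nbg og; rewrite -wpos // odd_gt0. Qed.

Definition odd_dart g := ~~ bud g && odd (w g).
Definition near_special g := adjacent_to bud alpha sigma g hs.

Lemma odd_dart_alpha g : odd_dart g -> odd_dart (alpha g).
Proof. by case/andP=> nbg og; rewrite /odd_dart mobile_nbud_alpha // mobile_odd_alpha. Qed.

(* White vertices away from the special vertex have even weight. *)
Lemma mobile_odd_step g : odd_dart g -> ~~ near_special (alpha g) ->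
  exists g', [/\ vtx g' = vtx (alpha g), odd_dart g' & g' != alpha g].
Proof.
case: mobile => _ _ _ _ [_ _ wwhite _] /odd_dart_alpha /andP[nbag oag] far.
have even_vtx : ~~ odd (vweight bud w (vtx (alpha g))).
  by rewrite wwhite ?mul2n ?odd_double //; apply: mobile_odd_white.
have g_in : (alpha g \in vtx (alpha g)) && ~~ bud (alpha g) by rewrite vtx_id.
have [g' /andP[g'in nbg'] /andP[og' g'ag]] := odd_sum_other even_vtx g_in oag.
by exists g'; split; rewrite /odd_dart ?nbg' //; apply/eqP; rewrite vtx_eqE.
Qed.

(* Odd darts have positive weight, so they avoid every black vertex. *)
Lemma odd_dart_avoid_black e g : black (vtx e) -> ~~ bud e -> odd_dart g ->
  g \in [set h | ~~ bud h] :\ e :\ alpha e.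
Proof.
case: mobile => _ _ wpos _ _ be nbe /andP[nbg og]; rewrite !inE nbg andbT.
have we : w e = 0 by apply/eqP; rewrite -leqn0 leqNgt wpos // be.
by apply/andP; split; apply: contraTneq og => ->; rewrite ?mobile_odd_alpha // we.
Qed.

(* The rest of the cycle joins the two ends of the edge of its first dart. *)
Lemma mobile_no_odd_cycle c : graph_cycle alpha sigma c -> all odd_dart c -> False.
Proof.
case/and4P; case: c => [//|x s] _ cyc uv ue /= /andP[ox os].
have ux : uniq (x :: s) := map_uniq uv.
have nbx : ~~ bud x by case/andP: ox.
set A0 := [set h | ~~ bud h] :\ x :\ alpha x.
have sA0 : all (mem A0) s.
  apply/allP => y ys; rewrite !inE; have /andP[-> _] := allP os y ys; rewrite andbT.
  apply/andP; split; last by apply: contraTneq ux => <-; rewrite /= ys.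
  apply: contraTneq ue => yx; rewrite /= negb_and negbK; apply/orP; left.
  by apply/mapP; exists y => //; rewrite yx /edge_of alphaK setUC.
apply: (negP (plane_tree_edge_separates alphaK tree nbx)).
have clA0 := alpha_closedD2 alphaK (a := x) (plane_tree_alpha_closed alphaK tree).
rewrite (span_rel_sym sigma alphaK clA0).
move: cyc; rewrite /= rcons_path => /andP[pa cl].
case: s pa cl sA0 {os ue ux uv} => [|y s] /= pa cl sA0.
  by apply: connect_span_vtx; rewrite -vtx_eqE eq_sym.
case/andP: pa => xy pa.
apply: connect_trans (connect_span_vtx _ _ _) (connect_trans (connect_span_path pa sA0) _).
  by rewrite -vtx_eqE eq_sym.
by apply: connect_span_vtx; rewrite -vtx_eqE eq_sym.
Qed.

(* The edge [e] from the special vertex to the end of the path is bypassed by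
   turning around the special vertex to the edge [ga] reaching the start of
   the path, then following the path. *)
Lemma mobile_no_odd_exit_path g1 p1 : near_special g1 ->
  exit_path alpha sigma odd_dart near_special g1 p1 -> False.
Proof.
case/exists_inP => ga gain /andP[nbga aga] [pa1 ao1 u1 /exists_inP[gb gbin /andP[nbgb agb]] _].
case: mobile => _ _ _ _ [[bs _ _] _ _ _].
set l1 := last g1 p1 in u1 gbin agb.
set e := alpha gb.
have nbe : ~~ bud e by apply: mobile_nbud_alpha.
have ve : vtx e = vtx hs by apply/eqP; rewrite vtx_eqE.
have be : black (vtx e) by rewrite ve.
have white_l1 : ~~ black (vtx (alpha l1)).
  by case/andP: (odd_dart_alpha (allP ao1 _ (mem_last _ _))); apply: mobile_odd_white.
have vgb : vtx gb = vtx (alpha l1) by apply/eqP; rewrite vtx_eqE.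
have vga : vtx ga = vtx g1 by apply/eqP; rewrite vtx_eqE.
have ends_differ : vtx g1 != vtx (alpha l1).
  move: u1; rewrite cats1 rcons_uniq => /andP[nin _]; apply: contraNneq nin => <-.
  by rewrite inE eqxx.
set A0 := [set h | ~~ bud h] :\ e :\ alpha e.
have gaA0 : alpha ga \in A0.
  rewrite !inE mobile_nbud_alpha // andbT /e alphaK; apply/andP; split.
    apply: contraNneq white_l1 => E; rewrite -vgb -E.
    by have /eqP -> : vtx (alpha ga) == vtx hs by rewrite vtx_eqE.
  by rewrite (inj_eq perm_inj); apply: contraNneq ends_differ => E; rewrite -vga E vgb.
apply: (negP (plane_tree_edge_separates alphaK tree nbe)).
apply: connect_trans (_ : connect _ e (alpha ga)) _.
  by apply: connect_span_vtx; rewrite -vtx_eqE ve vtx_eqE.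
apply: connect_trans (connect1 (_ : span_rel alpha sigma A0 (alpha ga) ga)) _.
  by rewrite /span_rel gaA0 alphaK eqxx !orbT.
apply: connect_trans (_ : connect _ ga g1) _.
  by apply: connect_span_vtx; rewrite -vtx_eqE vga.
have pc : path (consec alpha sigma) g1 p1 by apply: sub_path pa1 => ? ? /andP[].
have aA0 : all (mem A0) (g1 :: p1).
  by apply/allP => z zin; apply: odd_dart_avoid_black => //; apply: (allP ao1).
apply: connect_trans (connect_span_path pc aA0) _.
by rewrite /e alphaK; apply: connect_span_vtx; rewrite -vtx_eqE vgb.
Qed.

Lemma mobile_weight_even h : ~~ bud h -> ~~ odd (w h).
Proof.
move=> nbh; have := no_P_dart alphaK mobile_odd_step odd_dart_alpha mobile_no_odd_cycle
  mobile_no_odd_exit_path h.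
by rewrite /odd_dart nbh.
Qed.

End BranchingMobile.

(** * Minimal pseudo-orientations *)

Section PseudoOrientation.
Variable D : finType.
Variables (alpha sigma : {perm D}) (hb r : D) (w : D -> nat) (b : nat).
Hypothesis alphaK : involutive alpha.
Hypothesis connected : forall x y, connect (dmove alpha sigma) x y.
Local Notation vtx := (Defs.vtx sigma).
Local Notation phi := (alpha * sigma)%g.
Local Notation F := (fface alpha sigma hb).
Local Notation right_of c x := (root_on_right alpha sigma x c).
Hypothesis boundary_simple : {in F &, injective vtx}.
Hypothesis orient : pseudo_orientation alpha sigma (2 * b) hb w.
Hypothesis minimal : minimal_orientation alpha sigma w r.

Lemma vtx_phi x : vtx (phi x) = vtx (alpha x).
Proof. by rewrite permM vtxS. Qed.

Lemma boundary_porbit x : x \in F -> porbit phi x = F.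
Proof. by move=> xF; apply/eqP; rewrite eq_porbit_mem. Qed.

Lemma boundary_phi x : x \in F -> phi x \in F.
Proof. by move=> xF; rewrite -(boundary_porbit xF); have := mem_porbit phi 1 x; rewrite expg1. Qed.

Lemma boundary_traject x n : x \in F -> {subset traject phi x n <= F}.
Proof. by move=> xF _ /trajectP[i _ ->]; elim: i => //= i IH; apply: boundary_phi. Qed.

Lemma boundary_weight x : x \in F -> w x = 0 /\ 0 < w (alpha x).
Proof. by case: orient => _ _; apply. Qed.

Lemma boundary_alpha_notin x : x \in F -> alpha x \notin F.
Proof.
by move=> xF; apply/negP => /boundary_weight[w0 _]; case: (boundary_weight xF); rewrite w0.
Qed.

Definition odd_weight g := odd (w g).
Definition near_boundary g := [exists g' in F, vtx g' == vtx g].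

Lemma odd_weight_alpha g : odd_weight (alpha g) = odd_weight g.
Proof.
case: orient => wedge _ _; apply: odd_eq_of_even_sum.
by rewrite wedge even_double_sub2.
Qed.

Lemma odd_weight_ingoing g : odd_weight g -> 0 < w (alpha g).
Proof. by rewrite -odd_weight_alpha; apply: odd_gt0. Qed.

Lemma boundary_even x : x \in F -> ~~ odd_weight x.
Proof. by case/boundary_weight => w0 _; rewrite /odd_weight w0. Qed.

Lemma boundary_alpha_even x : x \in F -> ~~ odd_weight (alpha x).
Proof. by rewrite odd_weight_alpha; apply: boundary_even. Qed.

Lemma notin_odd_seq Q y : all odd_weight Q -> ~~ odd_weight y -> y \notin Q.
Proof. by move=> oQ; apply: contra => /(allP oQ). Qed.

(* Vertices away from the boundary have even weight. *)
Lemma orient_odd_step g : odd_weight g -> ~~ near_boundary (alpha g) ->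
  exists g', [/\ vtx g' = vtx (alpha g), odd_weight g' & g' != alpha g].
Proof.
rewrite -odd_weight_alpha => oag far.
have even_vtx : ~~ odd (\sum_(g' in vtx (alpha g)) w g').
  case: orient => _ wvtx _; rewrite wvtx ?mul2n ?odd_double // => g' g'F.
  by apply: contraNneq far => E; apply/exists_inP; exists g'; rewrite ?E.
have [g' g'in /andP[og' g'ag]] := odd_sum_other even_vtx (vtx_id _ _) oag.
by exists g'; split => //; apply/eqP; rewrite vtx_eqE.
Qed.

(* An odd cycle is directed both ways, and the root lies on the right of one
   of the two directions. *)
Lemma orient_no_odd_cycle c : graph_cycle alpha sigma c -> all odd_weight c -> False.
Proof.
move=> gc oc; set c' := map alpha (rev c).
have oc' : all odd_weight c'.
  by rewrite all_map all_rev; apply/allP => g /(allP oc) /=; rewrite odd_weight_alpha.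
pose S x := (x \in c) || (alpha x \in c).
have S_alpha x : S x -> S (alpha x) by rewrite /S alphaK orbC.
have outside x : ~~ S x -> [&& x \notin c, alpha x \notin c, x \notin c' & alpha x \notin c'].
  by rewrite /S negb_or /c' !(mem_map_alpha_rev alphaK) alphaK => /andP[-> ->].
have Sright x : S x -> right_of c x || right_of c' x.
  case/orP=> [xc|axc]; apply/orP; [left|right]; apply/hasP; exists x => //.
  by rewrite (mem_map_alpha_rev alphaK).
have S0 : exists x0, S x0.
  by case/and4P: gc; case E: c => // [x s] _ _ _ _; exists x; rewrite /S E inE eqxx.
have directed d : all odd_weight d -> all (fun g => 0 < w (alpha g)) d.
  by move=> od; apply/allP => g /(allP od) /odd_weight_ingoing.
case/orP: (right_of_cover alphaK S_alpha outside Sright S0 connected r); apply/negP/minimal.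
  by rewrite /directed_circuit gc directed.
by rewrite /directed_circuit graph_cycle_rev // directed.
Qed.

Lemma boundary_consec_nb z : z \in F -> consec_nb alpha sigma z (phi z).
Proof.
move=> zF; rewrite /consec_nb /consec vtx_phi eqxx /=; apply/negP => /eqP E.
by have [_] := boundary_weight zF; rewrite -E (boundary_weight (boundary_phi zF)).1.
Qed.

Lemma boundary_arc_path z m : z \in F -> path (consec_nb alpha sigma) z (traject phi (phi z) m).
Proof.
elim: m z => [|m IH] z zF //=.
by rewrite boundary_consec_nb //= IH // boundary_phi.
Qed.

Lemma graph_cycle_boundary_arc P x0 g m : P != [::] -> sorted (consec_nb alpha sigma) P ->
  uniq (map vtx P) -> odd_weight (last x0 P) -> g \in F ->
  vtx (alpha (last x0 P)) = vtx g -> uniq (traject phi g m.+1) ->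
  {in traject phi g m.+1, forall z, vtx z \notin map vtx P} ->
  vtx (iter m.+1 phi g) = vtx (head x0 P) -> graph_cycle alpha sigma (P ++ traject phi g m.+1).
Proof.
case: P => // a s _ pa uv ol gF vl uarc arc_avoid vh.
rewrite -(drop0 (_ ++ _)); apply: (graph_cycle_drop alphaK (x0 := a)) => //.
- rewrite /= cat_path (pa : path _ a s) /= boundary_arc_path // andbT /consec_nb /consec vl eqxx /=.
  by apply: contraNneq (boundary_even gF) => ->; rewrite odd_weight_alpha.
- rewrite map_cat cat_uniq uv (map_inj_in_uniq _) ?uarc ?andbT; last first.
    by move=> z1 z2 /(boundary_traject gF) z1F /(boundary_traject gF); apply: boundary_simple.
  by apply/hasPn => _ /mapP[z zin ->]; apply: arc_avoid.
- by rewrite last_cat /= last_traject -vtx_phi -iterS vh.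
Qed.

Lemma boundary_vtx_off_exit_path g1 p z : exit_path alpha sigma odd_weight near_boundary g1 p ->
  z \in F -> vtx z \notin map vtx p.
Proof.
case=> pa _ _ _ inner zF; have pc : path (consec alpha sigma) g1 p.
  by apply: sub_path pa => ? ? /andP[].
rewrite (consec_path_tails pc); apply/mapP => -[g gin E].
by move/negP: (allP inner g gin); apply; apply/exists_inP; exists z; rewrite ?E.
Qed.

Lemma right_of_boundary_alpha Q arc g a : all odd_weight Q -> {subset arc <= F} ->
  g \in arc -> a \in F -> a \notin arc -> right_of (Q ++ arc) (alpha a).
Proof.
move=> oQ arcF garc aF aarc; apply: right_of_cross.
- have gc : g \in Q ++ arc by rewrite mem_cat garc orbT.
  by apply: right_of_porbit gc _; rewrite boundary_porbit //; apply: arcF.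
- by rewrite mem_cat negb_or aarc notin_odd_seq ?boundary_even.
- rewrite mem_cat negb_or notin_odd_seq ?boundary_alpha_even //=.
  by apply: contra (boundary_alpha_notin aF) => /arcF.
Qed.

Lemma directed_odd_boundary Q arc : all odd_weight Q -> {subset arc <= F} ->
  all (fun g => 0 < w (alpha g)) (Q ++ arc).
Proof.
move=> oQ arcF; rewrite all_cat; apply/andP; split; apply/allP => g.
  by move/(allP oQ); apply: odd_weight_ingoing.
by move/arcF/boundary_weight => [].
Qed.

Section ExitPath.
Variables (g1 : D) (p1 : seq D) (gx gy : D) (m n : nat).
Hypothesis exit : exit_path alpha sigma odd_weight near_boundary g1 p1.
Hypotheses (gxF : gx \in F) (gyF : gy \in F).
Hypotheses (vgx : vtx gx = vtx g1) (vgy : vtx gy = vtx (alpha (last g1 p1))).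
Hypotheses (itx : iter m.+1 phi gx = gy) (ity : iter n.+1 phi gy = gx).
Hypothesis uarcs : uniq (traject phi gx m.+1 ++ traject phi gy n.+1).
Hypothesis arcsF : traject phi gx m.+1 ++ traject phi gy n.+1 =i F.
Local Notation P := (g1 :: p1).
Local Notation P' := (map alpha (rev (g1 :: p1))).
Local Notation arc_x := (traject phi gx m.+1).
Local Notation arc_y := (traject phi gy n.+1).

Let arcxF : {subset arc_x <= F}. Proof. by move=> z zx; rewrite -arcsF mem_cat zx. Qed.
Let arcyF : {subset arc_y <= F}. Proof. by move=> z zy; rewrite -arcsF mem_cat zy orbT. Qed.
Let gx_arc : gx \in arc_x. Proof. exact: mem_head. Qed.
Let gy_arc : gy \in arc_y. Proof. exact: mem_head. Qed.
Let arcs_disjoint z : z \in arc_x -> z \notin arc_y.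
Proof.
by move=> zx; move: uarcs; rewrite cat_uniq => /and3P[_ /hasPn h _]; apply: contraL zx => /h.
Qed.
Let oddP : all odd_weight P. Proof. by case: exit. Qed.
Let oddP' : all odd_weight P'.
Proof. by rewrite all_map all_rev; apply/allP => z /(allP oddP) /=; rewrite odd_weight_alpha. Qed.
Let pathP : path (consec alpha sigma) g1 p1.
Proof. by case: exit => pa _ _ _ _; apply: sub_path pa => ? ? /andP[]. Qed.

Lemma exit_path_cycle : graph_cycle alpha sigma (P ++ arc_y).
Proof.
case: exit => pa _ u _ _; apply: (graph_cycle_boundary_arc (x0 := g1)) => //.
- by move: u; rewrite cat_uniq => /andP[].
- by apply: (allP oddP); rewrite /= mem_last.
- by move: uarcs; rewrite cat_uniq => /and3P[].
- move=> z zy; rewrite /= inE negb_or (boundary_vtx_off_exit_path exit (arcyF zy)) andbT -vgx.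
  apply/eqP => /(boundary_simple (arcyF zy) gxF) E.
  by move: (arcs_disjoint gx_arc); rewrite -E zy.
- by rewrite ity vgx.
Qed.

Lemma exit_path_cycle_rev : graph_cycle alpha sigma (P' ++ arc_x).
Proof.
case: exit => pa _ u _ _.
have vP' : map vtx P' = rev (rcons (map vtx p1) (vtx (alpha (last g1 p1)))).
  by rewrite -map_comp map_rev (consec_path_heads pathP).
apply: (graph_cycle_boundary_arc (x0 := g1)).
- by rewrite -size_eq0 size_map size_rev.
- exact: (sorted_consec_nb_rev alphaK (s := g1 :: p1) pa).
- by rewrite vP' rev_uniq -cats1; move: u => /= /andP[].
- by apply: (allP oddP'); rewrite rev_cons map_rcons last_rcons mem_rcons mem_head.
- exact: gxF.
- by rewrite rev_cons map_rcons last_rcons alphaK vgx.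
- by move: uarcs; rewrite cat_uniq => /andP[].
- move=> z zx; rewrite vP' mem_rev mem_rcons inE negb_or -vgy.
  rewrite (boundary_vtx_off_exit_path exit (arcxF zx)) andbT.
  apply/eqP => /(boundary_simple (arcxF zx) gyF) E.
  by move: (arcs_disjoint zx); rewrite E gy_arc.
- by rewrite itx vgy lastI rev_rcons.
Qed.

Lemma exit_path_cover z : right_of (P ++ arc_y) z || right_of (P' ++ arc_x) z.
Proof.
pose S z := [|| z \in P, alpha z \in P, z \in F | alpha z \in F].
have S_alpha x : S x -> S (alpha x) by rewrite /S alphaK => /or4P[] ->; rewrite ?orbT.
have outside x : ~~ S x -> [&& x \notin P ++ arc_y, alpha x \notin P ++ arc_y,
                               x \notin P' ++ arc_x & alpha x \notin P' ++ arc_x].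
  rewrite /S => /norP[n1 /norP[n2 /norP[n3 n4]]].
  rewrite !mem_cat !(mem_map_alpha_rev alphaK) alphaK (negbTE n1) (negbTE n2) !orFb.
  apply/and4P; split; [move: n3 | move: n4 | move: n3 | move: n4]; apply: contra.
  - exact: arcyF.
  - exact: arcyF.
  - exact: arcxF.
  - exact: arcxF.
have mem_right (c : seq D) x : x \in c -> right_of c x by move=> xc; apply/hasP; exists x.
have Sright x : S x -> right_of (P ++ arc_y) x || right_of (P' ++ arc_x) x.
  case/or4P => [xP|axP|xF|axF].
  - by rewrite mem_right // mem_cat xP.
  - by rewrite orbC mem_right // mem_cat (mem_map_alpha_rev alphaK) axP.
  - have gyC : gy \in P ++ arc_y by rewrite mem_cat gy_arc orbT.
    by rewrite (right_of_porbit gyC) // boundary_porbit.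
  - rewrite -[x]alphaK; move: (axF); rewrite -arcsF mem_cat => /orP[ax|ay].
      by rewrite (right_of_boundary_alpha oddP arcyF gy_arc axF (arcs_disjoint ax)).
    have nax : alpha x \notin arc_x by apply: contraL ay; apply: arcs_disjoint.
    by rewrite (right_of_boundary_alpha oddP' arcxF gx_arc axF nax) orbT.
have S0 : exists x, S x by exists g1; rewrite /S mem_head.
exact: (right_of_cover alphaK S_alpha outside Sright S0 connected z).
Qed.

(* Closing the path by either arc of the boundary face gives two directed
   cycles, and the root lies on the right of one of them. *)
Lemma exit_path_directed_cover : exists c1 c2,
  [/\ directed_circuit alpha sigma w c1, directed_circuit alpha sigma w c2 &
      right_of c1 r || right_of c2 r].
Proof.
exists (P ++ arc_y), (P' ++ arc_x); split; last exact: exit_path_cover.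
  by rewrite /directed_circuit exit_path_cycle directed_odd_boundary.
by rewrite /directed_circuit exit_path_cycle_rev directed_odd_boundary.
Qed.

End ExitPath.

Lemma orient_no_odd_exit_path g1 p1 : near_boundary g1 ->
  exit_path alpha sigma odd_weight near_boundary g1 p1 -> False.
Proof.
case/exists_inP=> gx gxF /eqP vgx exit.
have [pa oP u /exists_inP[gy gyF /eqP vgy] _] := exit.
have gxy : gx != gy.
  move: u; rewrite cats1 rcons_uniq => /andP[+ _]; apply: contraNneq => E.
  by rewrite -vgy -E vgx map_f ?mem_head.
have gyx : gy \in porbit phi gx by rewrite boundary_porbit.
have [m [n [itx ity uarcs arcs]]] := porbit_arcs gyx gxy.
have arcsF : traject phi gx m.+1 ++ traject phi gy n.+1 =i F.
  by move=> z; rewrite arcs boundary_porbit.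
have [c1 [c2 [dc1 dc2]]] := exit_path_directed_cover exit gxF gyF vgx vgy itx ity uarcs arcsF.
by case/orP; apply/negP/minimal.
Qed.

Lemma orient_weight_even h : ~~ odd (w h).
Proof.
have odd_alpha g : odd_weight g -> odd_weight (alpha g) by rewrite odd_weight_alpha.
exact: (no_P_dart alphaK orient_odd_step odd_alpha orient_no_odd_cycle orient_no_odd_exit_path h).
Qed.

End PseudoOrientation.

Theorem proposition23 (b q : nat) :
  2 <= b -> b <= q ->
  (forall (H : finType) (bud : pred H) (alpha sigma : {perm H})
          (black : {set H} -> bool) (w : H -> nat) (hs : H),
     branching_mobile bud alpha sigma black w (2 * q) (2 * b) hs ->
     forall h, ~~ bud h -> ~~ odd (w h))
  /\
  (forall (D : finType) (alpha sigma : {perm D}) (hb r : D) (w : D -> nat),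
     annular_dangulation alpha sigma (2 * q) (2 * b) hb r ->
     has_girth alpha sigma (2 * b) ->
     pseudo_orientation alpha sigma (2 * b) hb w ->
     minimal_orientation alpha sigma w r ->
     forall h, ~~ odd (w h)).
Proof.
move=> _ _; split=> [H bud alpha sigma black w hs mobile|].
  exact: mobile_weight_even mobile.
move=> D alpha sigma hb r w [[alphaK _ connected _] _ boundary_simple _ _] _ orient minimal.
exact: orient_weight_even alphaK connected boundary_simple orient minimal.
Qed.
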